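(* Let $R$ be a ring with a complete, separated Zariskian filtration $w:R\to\mathbb{Z}\cup\{\infty\}$, let $(\sigma,\delta)$ be a skew derivation on $R$ compatible with $w$, and let $S=R^b[[x;\sigma,\delta]]$. Let $I$ be a closed ideal of $R$ with $\sigma(I)\subseteq I$ and $\delta(I)\subseteq I$, and let $(\overline\sigma,\overline\delta)$ be the induced skew derivation of $R/I$. Then $(\overline\sigma,\overline\delta)$ is compatible with the quotient filtration $\overline w(r+I)=\sup\{w(r+y):y\in I\}$. Moreover the closure $\overline{IS}$ of $IS$ in $S$ (with respect to $f_w$) is a two-sided ideal of $S$, and $S/\overline{IS}\cong(R/I)^b[[x;\overline\sigma,\overline\delta]]$.
   Context: Filtrations $u$ satisfy $u(0)=\infty$, $u(x+y)\ge\min$, $u(xy)\ge u(x)+u(y)$, are separated and descending with level sets $F_nR=\{u\ge n\}$; Zariskian means the Rees ring $\bigoplus_nF_nR\,t^{-n}$ is Noetherian and $F_1R\subseteq J(F_0R)$ ($R/I$ is complete with respect to $\overline w$). A skew derivation is $(\sigma,\delta)$ with $\sigma$ an automorphism and $\delta(ab)=\delta(a)b+\sigma(a)\delta(b)$; it is compatible with $u$ if $\deg_u(\sigma-\mathrm{id})>0$ and $\deg_u(\delta)>0$, where $\deg_u(d)=\inf_{x\ne0}\{u(d(x))-u(x)\}$. For complete $(R,u)$ and compatible $(\sigma,\delta)$, $R^b[[x;\sigma,\delta]]$ is the ring of series $\sum_{n\ge0}r_nx^n$ with $u(r_n)+\tfrac12n\to\infty$, with multiplication extending $xa=\sigma(a)x+\delta(a)$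 continuously and $R$-linearly, filtered by $f_u(\sum r_ix^i)=\inf_i\{u(r_i)+\tfrac12i\}$. *)

(* Filtration values Z ∪ {∞} are modelled in \bar int
   (constructive_ereal); -oo is excluded by the definition of a wfiltration. *)
From HB Require Import structures.
From mathcomp Require Import all_boot all_order all_algebra.
From mathcomp Require Import constructive_ereal.
From Stdlib Require Import ClassicalEpsilon.

Set Implicit Arguments.
Unset Strict Implicit.
Unset Printing Implicit Defensive.

Import Order.TTheory GRing.Theory Num.Theory.
Local Open Scope ring_scope.

Section Defs.
Variable A : pzRingType.
Implicit Types (u : A -> \bar int) (x y : A).

Definition wfiltration u : Prop :=
  [/\ u 0 = +oo%E,
      (forall x, u x != -oo%E),
      (forall x y, (Order.min (u x) (u y) <= u (x + y)%R)%E) &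
      (forall x y, (u x + u y <= u (x * y)%R)%E)].

Definition wseparated u : Prop := forall x, u x = +oo%E -> x = 0.

Definition Flevel u (n : int) x : Prop := (n%:E <= u x)%E.

Definition fconv u (s : nat -> A) (l : A) : Prop :=
  forall N : int, exists n0 : nat, forall n, (n0 <= n)%N -> Flevel u N (s n - l).

Definition fcauchy u (s : nat -> A) : Prop :=
  forall N : int, exists n0 : nat, forall m n, (n0 <= m)%N -> (n0 <= n)%N ->
    Flevel u N (s m - s n).

Definition wcomplete u : Prop :=
  forall s, fcauchy u s -> exists l, fconv u s l.

(* Rees ring  (+)_n F_nR t^{-n}: elements are finitely supported a : int -> A
   with a n ∈ F_n R (a n is the coefficient of t^{-n}). *)
Definition rees_el u (a : int -> A) : Prop :=
  (exists N : nat, forall n : int, (N < absz n)%N -> a n = 0) /\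
  (forall n, Flevel u n (a n)).

Definition supp_bound (a : int -> A) : nat :=
  epsilon (inhabits 0%N) (fun N : nat => forall n : int, (N < absz n)%N -> a n = 0).

(* product in the Rees ring: (ab)_n = sum_{i+j=n} a_i b_j *)
Definition rees_mul (a b : int -> A) (n : int) : A :=
  \sum_(i < (supp_bound a).*2.+1)
     a (i%:Z - (supp_bound a)%:Z) * b (n - (i%:Z - (supp_bound a)%:Z)).

Definition rees_lideal u (L : (int -> A) -> Prop) : Prop :=
  [/\ (forall a, L a -> rees_el u a), L (fun _ => 0),
      (forall a b, L a -> L b -> L (fun n => a n - b n)) &
      (forall r a, rees_el u r -> L a -> L (rees_mul r a))].

Definition rees_rideal u (L : (int -> A) -> Prop) : Prop :=
  [/\ (forall a, L a -> rees_el u a), L (fun _ => 0),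
      (forall a b, L a -> L b -> L (fun n => a n - b n)) &
      (forall r a, rees_el u r -> L a -> L (rees_mul a r))].

Definition rees_lfg u (L : (int -> A) -> Prop) : Prop :=
  exists (k : nat) (g : 'I_k -> int -> A), (forall j, L (g j)) /\
    forall a, L a -> exists r : 'I_k -> int -> A, (forall j, rees_el u (r j)) /\
      a = (fun n => \sum_(j < k) rees_mul (r j) (g j) n).

Definition rees_rfg u (L : (int -> A) -> Prop) : Prop :=
  exists (k : nat) (g : 'I_k -> int -> A), (forall j, L (g j)) /\
    forall a, L a -> exists r : 'I_k -> int -> A, (forall j, rees_el u (r j)) /\
      a = (fun n => \sum_(j < k) rees_mul (g j) (r j) n).

Definition rees_noetherian u : Prop :=
  (forall L, rees_lideal u L -> rees_lfg u L) /\
  (forall L, rees_rideal u L -> rees_rfg u L).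

Definition F0_lideal u (M : A -> Prop) : Prop :=
  [/\ (forall x, M x -> Flevel u 0 x), M 0,
      (forall x y, M x -> M y -> M (x - y)) &
      (forall y x, Flevel u 0 y -> M x -> M (y * x))].

Definition F0_max_lideal u (M : A -> Prop) : Prop :=
  [/\ F0_lideal u M, ~ M 1 &
      forall N, F0_lideal u N -> ~ N 1 -> (forall x, M x -> N x) ->
        forall x, N x -> M x].

Definition jacobson_F0 u x : Prop :=
  Flevel u 0 x /\ forall M, F0_max_lideal u M -> M x.

Definition zariskian u : Prop :=
  rees_noetherian u /\ (forall x, Flevel u 1 x -> jacobson_F0 u x).

(* deg_u(d) > 0, where deg_u(d) = inf_{x<>0} (u(d x) - u(x)) *)
Definition deg_pos u (d : A -> A) : Prop :=
  exists c : int, 0 < c /\ forall x, x != 0 -> (u x + c%:E <= u (d x))%E.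

Definition compatible u (sigma delta : A -> A) : Prop :=
  deg_pos u (fun x => sigma x - x) /\ deg_pos u delta.

(* A series sum_n r_n x^n is represented by its coefficient sequence r. *)

(* u(r_n) + n/2 -> oo   (stated as 2 u(r_n) + n -> oo) *)
Definition bseq u (r : nat -> A) : Prop :=
  forall N : int, exists n0 : nat, forall n, (n0 <= n)%N ->
    ((2 * N)%:E <= u (r n) + u (r n) + (n%:Z)%:E)%E.

(* x^n a = sum_{i <= n} skc n i a x^i, from x a = sigma(a) x + delta(a) *)
Fixpoint skc (sigma delta : A -> A) (n : nat) : nat -> A -> A :=
  match n with
  | 0%N => fun i a => if i == 0%N then a else 0
  | n'.+1 => fun i a =>
      (if i is j.+1 then sigma (skc sigma delta n' j a) else 0)
      + delta (skc sigma delta n' i a)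
  end.

(* the u-adic sum of a series in A (a limit of partial sums; separatedness
   makes it unique when it exists) *)
Definition fsum u (s : nat -> A) : A :=
  epsilon (inhabits 0) (fun l => fconv u (fun N => \sum_(n < N) s n) l).

Definition skmul u (sigma delta : A -> A) (f g : nat -> A) (k : nat) : A :=
  \sum_(m < k.+1) fsum u (fun n => f n * skc sigma delta n (k - m) (g m)).

Definition skadd (f g : nat -> A) : nat -> A := fun k => f k + g k.
Definition skone : nat -> A := fun k => if k == 0%N then 1 else 0.
Definition skzero : nat -> A := fun _ => 0.
Definition skconst (a : A) : nat -> A := fun k => if k == 0%N then a else 0.

(* f_u(h) >= N, i.e. u(h_i) + i/2 >= N for all i *)
Definition fnear u (h : nat -> A) (N : int) : Prop :=
  forall i, ((2 * N)%:E <= u (h i) + u (h i) + (i%:Z)%:E)%E.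

Definition sclosure u (X : (nat -> A) -> Prop) (f : nat -> A) : Prop :=
  bseq u f /\ forall N : int, exists g, X g /\ fnear u (fun i => f i - g i) N.

Definition IS_set u (sigma delta : A -> A) (I : A -> Prop) (f : nat -> A) : Prop :=
  exists (k : nat) (a : 'I_k -> A) (s : 'I_k -> nat -> A),
    (forall j, I (a j) /\ bseq u (s j)) /\
    f = (fun n => \sum_(j < k) skmul u sigma delta (skconst (a j)) (s j) n).

Definition s_ideal u (sigma delta : A -> A) (X : (nat -> A) -> Prop) : Prop :=
  [/\ (forall f, X f -> bseq u f), X skzero,
      (forall f g, X f -> X g -> X (fun k => f k - g k)) &
      (forall h f, bseq u h -> X f ->
          X (skmul u sigma delta h f) /\ X (skmul u sigma delta f h))].

Definition ring_ideal (I : A -> Prop) : Prop :=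
  [/\ I 0, (forall x y, I x -> I y -> I (x - y)) &
      (forall a x, I x -> I (a * x) /\ I (x * a))].

Definition wclosed u (I : A -> Prop) : Prop :=
  forall x, (forall N : int, exists y, I y /\ Flevel u N (x - y)) -> I x.

End Defs.

Definition is_lub (X : \bar int -> Prop) (v : \bar int) : Prop :=
  (forall e, X e -> (e <= v)%E) /\ (forall b, (forall e, X e -> (e <= b)%E) -> (v <= b)%E).

(* ring isomorphism S / X ≅ T, stated via a surjective ring morphism with kernel X *)
Definition skiso (A B : pzRingType) (uA : A -> \bar int) (sA dA : A -> A)
  (uB : B -> \bar int) (sB dB : B -> B) (X : (nat -> A) -> Prop) : Prop :=
  exists phi : (nat -> A) -> (nat -> B),
  [/\ (forall f, bseq uA f -> bseq uB (phi f)),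
      (forall g, bseq uB g -> exists f, bseq uA f /\ phi f = g) &
  [/\ (forall f g, bseq uA f -> bseq uA g -> phi (skadd f g) = skadd (phi f) (phi g)),
      (forall f g, bseq uA f -> bseq uA g ->
          phi (skmul uA sA dA f g) = skmul uB sB dB (phi f) (phi g)),
      phi (@skone A) = @skone B &
       (forall f, bseq uA f -> (phi f = @skzero B <-> X f))]].

(* Since [w] takes values in Z u {oo}, the supremum defining [wbar] is attained:
   every class of R/I has a representative [r] with [w r = wbar (pi r)].  Hence
   [wbar] is a filtration, separated because I is closed, and positive degrees of
   [sigma - id] and [delta] descend to the quotient by evaluating on such
   representatives; lifting coefficientwise, every bounded series over R/I is the
   image of a bounded series over R.

   Because I is closed, the closure of IS consists of the bounded series all of
   whose coefficients lie in I: the truncations [sum_(j < n) f_j x^j] of such a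
   series lie in IS and converge to it.  This set is a two-sided ideal because I
   is stable under [sigma] and [delta], and it is the kernel of the coefficientwise
   projection S -> (R/I)^b[[x; sigmab, deltab]], which is multiplicative because
   [pi] commutes with the convergent sums defining the product. *)

From HB Require Import structures.
From mathcomp Require Import all_boot all_order all_algebra.
From mathcomp Require Import constructive_ereal.
From mathcomp Require Import zify.
From Stdlib Require Import Classical_Prop ClassicalEpsilon FunctionalExtensionality.
(* Imported last so that [Defs.bseq] shadows MathComp's bounded sequences. *)
From Pilot Require Import Defs.

Set Implicit Arguments.
Unset Strict Implicit.
Unset Printing Implicit Defensive.

Import Order.TTheory GRing.Theory Num.Theory.
Local Open Scope ring_scope.

Section RingIdeal.
Variables (A : pzRingType) (I : A -> Prop).
Hypothesis I_ideal : ring_ideal I.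

Lemma ideal0 : I 0.
Proof. by case: I_ideal. Qed.

Lemma idealB x y : I x -> I y -> I (x - y).
Proof. by case: I_ideal => _ + _; apply. Qed.

Lemma idealN x : I x -> I (- x).
Proof. by rewrite -sub0r; apply: idealB ideal0. Qed.

Lemma idealD x y : I x -> I y -> I (x + y).
Proof. by move=> x_I /idealN y_I; rewrite -[y]opprK; apply: idealB. Qed.

Lemma idealMl a x : I x -> I (a * x).
Proof. by case: I_ideal => _ _ + x_I; move/(_ a x x_I) => []. Qed.

Lemma idealMr a x : I x -> I (x * a).
Proof. by case: I_ideal => _ _ + x_I; move/(_ a x x_I) => []. Qed.

Lemma ideal_sum (J : Type) (r : seq J) (P : pred J) (F : J -> A) :
  (forall j, P j -> I (F j)) -> I (\sum_(j <- r | P j) F j).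
Proof. by move=> F_I; apply: (big_ind I) => //; [exact: ideal0 | exact: idealD]. Qed.

End RingIdeal.

Section Filtration.
Variables (A : pzRingType) (u : A -> \bar int).
Hypothesis u_filt : wfiltration u.

(* [dlev x K] says [x \in F_{K/2}]: doubling makes the weights [u(r_i) + i/2]
   of [f_u] integral. *)
Definition dlev (x : A) (K : int) : Prop := (K%:E <= u x + u x)%E.

Definition dnull (t : nat -> A) : Prop :=
  forall K, exists n0, forall n, (n0 <= n)%N -> dlev (t n) K.

Lemma filt_neq_ninfty x : u x != -oo%E.
Proof. by case: u_filt => _ + _ _; apply. Qed.

Lemma dlev0 K : dlev 0 K.
Proof. by case: u_filt => u0 _ _ _; rewrite /dlev u0 leey. Qed.

Lemma dlev_le x K K' : K' <= K -> dlev x K -> dlev x K'.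
Proof. by move=> le_K; apply: le_trans; rewrite lee_fin. Qed.

Lemma dlevD x y K : dlev x K -> dlev y K -> dlev (x + y) K.
Proof.
case: u_filt => _ _ uD _; rewrite /dlev => hx hy.
apply: le_trans (leeD (uD x y) (uD x y)).
by have [_ | _] := leP (u x) (u y); [exact: hx | exact: hy].
Qed.

Lemma dlevM x y a b : dlev x a -> dlev y b -> dlev (x * y) (a + b).
Proof.
case: u_filt => _ _ _ uM; move: (uM x y) (filt_neq_ninfty x) (filt_neq_ninfty y).
rewrite /dlev; case: (u x) => [m||]; case: (u y) => [n||]; case: (u (x * y)) => [p||] //=;
  rewrite ?lee_fin ?leey //; lia.
Qed.

Lemma dlev_sum (J : Type) (r : seq J) (P : pred J) (F : J -> A) K :
  (forall j, P j -> dlev (F j) K) -> dlev (\sum_(j <- r | P j) F j) K.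
Proof.
by move=> hF; apply: (big_ind (fun z => dlev z K)) => [|x y|j /hF];
  [exact: dlev0 | exact: dlevD |].
Qed.

Lemma dlev_ex x : exists K, dlev x K.
Proof.
rewrite /dlev; move: (filt_neq_ninfty x); case: (u x) => [m||] // _.
  by exists (m + m); rewrite lee_fin.
by exists 0; rewrite leey.
Qed.

(* The axioms only give [u (- x) >= u (-1) + u x], and [u (-1)] may be negative. *)
Lemma dlevN_ex : exists c : nat, forall x K, dlev x K -> dlev (- x) (K - c%:Z).
Proof.
have [c hc] := dlev_ex (-1); exists `|c|%N => x K hx.
rewrite -mulN1r; apply: dlev_le (dlevM hc hx); lia.
Qed.

Lemma dlev_oo x : (forall K, dlev x K) -> u x = +oo%E.
Proof.
rewrite /dlev; move: (filt_neq_ninfty x); case: (u x) => [m||] // _ hx.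
by move: (hx (m + m + 1)); rewrite lee_fin; lia.
Qed.

Lemma dlev_shift x y c K : (u x + c%:E <= u y)%E -> dlev x K -> dlev y (K + 2 * c).
Proof.
rewrite /dlev; move: (filt_neq_ninfty x) (filt_neq_ninfty y).
by case: (u x) => [m||]; case: (u y) => [n||] //=; rewrite ?lee_fin ?leey //; lia.
Qed.

Lemma Flevel_dlev N x : Flevel u N x <-> dlev x (2 * N).
Proof.
rewrite /Flevel /dlev; move: (filt_neq_ninfty x).
by case: (u x) => [m||] // _; rewrite ?lee_fin ?leey //; lia.
Qed.

Lemma weight_dlev x N (i : nat) :
  ((2 * N)%:E <= u x + u x + (i%:Z)%:E)%E <-> dlev x (2 * N - i%:Z).
Proof.
rewrite /dlev; move: (filt_neq_ninfty x).
by case: (u x) => [m||] // _; rewrite ?lee_fin ?leey //; lia.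
Qed.

Lemma bseq_dlev f :
  bseq u f <-> forall K, exists n0, forall n, (n0 <= n)%N -> dlev (f n) (K - n%:Z).
Proof.
split=> hf K.
  have [n0 hn0] := hf `|K|%:Z; exists n0 => n /hn0 /weight_dlev.
  by apply: dlev_le; lia.
by have [n0 hn0] := hf (2 * K); exists n0 => n /hn0 hn; apply/weight_dlev.
Qed.

Lemma bseq_lbound f : bseq u f -> exists B, forall n, dlev (f n) (B - n%:Z).
Proof.
move=> /bseq_dlev /(_ 0) [n0 hn0].
have [B hB] : exists B, forall n, (n < n0)%N -> dlev (f n) (B - n%:Z).
  elim: n0 {hn0} => [|m [B hB]]; first by exists 0.
  have [C hC] := dlev_ex (f m).
  exists (B - `|B|%:Z - `|C + m%:Z|%:Z) => n; rewrite ltnS leq_eqVlt => /orP[/eqP-> | /hB].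
    by apply: dlev_le hC; lia.
  by apply: dlev_le; lia.
exists (B - `|B|%:Z) => n; have [/hB | /hn0] := ltnP n n0; apply: dlev_le; lia.
Qed.

Lemma bseqB f g : bseq u f -> bseq u g -> bseq u (fun k => f k - g k).
Proof.
move=> /bseq_dlev hf /bseq_dlev hg; apply/bseq_dlev => K.
have [c hc] := dlevN_ex.
have [n1 h1] := hf K; have [n2 h2] := hg (K + c%:Z).
exists (maxn n1 n2) => n; rewrite geq_max => /andP[/h1 hn1 /h2 /hc hn2].
by apply: dlevD hn1 _; apply: dlev_le hn2; lia.
Qed.

Lemma dnullB s t : dnull s -> dnull t -> dnull (fun n => s n - t n).
Proof.
move=> hs ht K; have [c hc] := dlevN_ex.
have [n1 h1] := hs K; have [n2 h2] := ht (K + c%:Z).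
exists (maxn n1 n2) => n; rewrite geq_max => /andP[/h1 hn1 /h2 /hc hn2].
by apply: dlevD hn1 _; apply: dlev_le hn2; lia.
Qed.

Lemma fconv_dnull s l : fconv u s l -> dnull (fun n => s n - l).
Proof.
move=> hs K; have [n0 hn0] := hs `|K|%:Z.
by exists n0 => n /hn0 /Flevel_dlev; apply: dlev_le; lia.
Qed.

Section Separated.
Hypothesis u_sep : wseparated u.

Lemma dnull_const x : dnull (fun=> x) -> x = 0.
Proof.
move=> hx; apply/u_sep/dlev_oo => K.
by have [n0 hn0] := hx K; exact: hn0 n0 (leqnn n0).
Qed.

Lemma fconv_unique s l l' : fconv u s l -> fconv u s l' -> l = l'.
Proof.
move=> /fconv_dnull hl /fconv_dnull hl'; apply/eqP; rewrite -subr_eq0; apply/eqP.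
apply: dnull_const; have := dnullB hl' hl; congr dnull.
by apply: functional_extensionality => n; rewrite opprB addrC addrA subrK.
Qed.

Lemma fsum_unique (t : nat -> A) l : fconv u (fun N => \sum_(n < N) t n) l -> fsum u t = l.
Proof.
move=> hl; apply: (fconv_unique _ hl); rewrite /fsum.
by apply: epsilon_spec; exists l.
Qed.

Lemma fsum_single (t : nat -> A) : (forall n, (0 < n)%N -> t n = 0) -> fsum u t = t 0%N.
Proof.
move=> t0; apply: fsum_unique => N; exists 1%N => -[|n] // _.
rewrite big_ord_recl big1 ?addr0 ?subrr => [|i _]; last exact: t0.
by apply/Flevel_dlev/dlev0.
Qed.

Hypothesis u_complete : wcomplete u.

Lemma fsum_conv (t : nat -> A) : dnull t -> fconv u (fun N => \sum_(n < N) t n) (fsum u t).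
Proof.
move=> ht; suff [l hl] : exists l, fconv u (fun N => \sum_(n < N) t n) l.
  by rewrite (fsum_unique hl).
apply: u_complete => N; have [c hc] := dlevN_ex.
have [n0 hn0] := ht (2 * N + c%:Z); exists n0.
have tail a b : (n0 <= a)%N -> (a <= b)%N ->
    dlev (\sum_(n < b) t n - \sum_(n < a) t n) (2 * N + c%:Z).
  move=> n0a ab; rewrite -!(big_mkord xpredT).
  rewrite (@big_cat_nat _ _ _ a 0 b _ _ (leq0n a) ab) /=.
  rewrite addrAC subrr add0r big_nat_cond; apply: dlev_sum => n.
  by case/andP=> /andP[an _] _; apply: hn0; exact: leq_trans an.
move=> m n n0m n0n; apply/Flevel_dlev.
have [nm | mn] := leqP n m; first by apply: dlev_le (tail _ _ n0n nm); lia.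
by rewrite -opprB; apply: dlev_le (hc _ _ (tail _ _ n0m (ltnW mn))); lia.
Qed.

Lemma fsum_dlev (t : nat -> A) K : dnull t -> (forall n, dlev (t n) K) -> dlev (fsum u t) K.
Proof.
move=> ht tK; have [c hc] := dlevN_ex.
have [n0 hn0] := fconv_dnull (fsum_conv ht) (K + c%:Z).
rewrite -[fsum u t](subrKC (\sum_(n < n0) t n)).
apply: dlevD; first exact: dlev_sum.
by rewrite -opprB; apply: dlev_le (hc _ _ (hn0 n0 (leqnn n0))); lia.
Qed.

Section Skew.
Variables (sigma : {rmorphism A -> A}) (delta : {additive A -> A}).

Lemma skc_gt n i a : (n < i)%N -> skc sigma delta n i a = 0.
Proof.
elim: n i => [|n IH] [|i] //= lt_ni.
by rewrite IH // IH ?rmorph0 ?raddf0 ?addr0 // ltnW.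
Qed.

Hypothesis compat : compatible u sigma delta.

Lemma dlev_sigma x K : dlev x K -> dlev (sigma x) K.
Proof.
case: compat => [[c [c_gt0 hc]] _] hx.
have [->|x_neq0] := eqVneq x 0; first by rewrite rmorph0; exact: dlev0.
rewrite -[sigma x](subrK x); apply: dlevD; last exact: hx.
by apply: dlev_le (dlev_shift (hc x x_neq0) hx); lia.
Qed.

Lemma dlev_delta x K : dlev x K -> dlev (delta x) (K + 2).
Proof.
case: compat => [_ [c [c_gt0 hc]]] hx.
have [->|x_neq0] := eqVneq x 0; first by rewrite raddf0; exact: dlev0.
by apply: dlev_le (dlev_shift (hc x x_neq0) hx); lia.
Qed.

Lemma skc_dlev a K n i :
  dlev a K -> dlev (skc sigma delta n i a) (K + 2 * n%:Z - 2 * i%:Z).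
Proof.
move=> ha; elim: n i => [|n IH] [|i] /=.
- by apply: dlev_le ha; lia.
- exact: dlev0.
- by rewrite add0r; apply: dlev_le (dlev_delta (IH 0%N)); lia.
- apply: dlevD; first by apply: dlev_le (dlev_sigma (IH i)); lia.
  by apply: dlev_le (dlev_delta (IH i.+1)); lia.
Qed.

Lemma skmul_term_dnull f g k m : bseq u f ->
  dnull (fun n => f n * skc sigma delta n (k - m) (g m)).
Proof.
move=> /bseq_dlev hf K; have [B hB] := dlev_ex (g m).
have [n0 hn0] := hf (K - B + 2 * (k - m)%:Z); exists n0 => n /hn0 hfn.
by apply: dlev_le (dlevM hfn (skc_dlev n (k - m) hB)); lia.
Qed.

Lemma skmul_bseq f g : bseq u f -> bseq u g -> bseq u (skmul u sigma delta f g).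
Proof.
move=> f_b g_b; apply/bseq_dlev => K.
have [Bf hBf] := bseq_lbound f_b; have [Bg hBg] := bseq_lbound g_b.
pose T := `|K|%:Z + `|Bf|%:Z + `|Bg|%:Z.
have [n0 hn0] := (bseq_dlev f).1 f_b T; have [m0 hm0] := (bseq_dlev g).1 g_b T.
exists (n0 + m0)%N => k le_k; apply: dlev_sum => m _.
apply: fsum_dlev; first exact: skmul_term_dnull.
move=> n; have [lt_n | le_n] := ltnP n (k - m).
  by rewrite skc_gt // mulr0; exact: dlev0.
have le_mk : (m <= k)%N by rewrite -ltnS.
have term a b : dlev (f n) (a - n%:Z) -> dlev (g m) (b - m%:Z) -> K <= a + b ->
    dlev (f n * skc sigma delta n (k - m) (g m)) (K - k%:Z).
  move=> hf hg le_K; apply: dlev_le (dlevM hf (skc_dlev n (k - m) hg)).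
  by move: le_n le_mk le_K; lia.
have [le_n0 | lt_n0] := leqP n0 n; first by apply: term (hn0 _ le_n0) (hBg m) _; lia.
have le_m0 : (m0 <= m)%N by move: le_k le_n lt_n0 le_mk; lia.
by apply: term (hBf n) (hm0 _ le_m0) _; lia.
Qed.

Section StableIdeal.
Variable I : A -> Prop.
Hypotheses (I_ideal : ring_ideal I) (I_closed : wclosed u I).
Hypotheses (I_sigma : forall a, I a -> I (sigma a)) (I_delta : forall a, I a -> I (delta a)).

Lemma skc_ideal a n i : I a -> I (skc sigma delta n i a).
Proof.
move=> a_I; elim: n i => [|n IH] [|i] /=; rewrite ?add0r //.
- exact: (ideal0 I_ideal).
- exact: I_delta.
- by apply: (idealD I_ideal); [apply: I_sigma | apply: I_delta].
Qed.

Lemma fsum_ideal t : dnull t -> (forall n, I (t n)) -> I (fsum u t).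
Proof.
move=> t_null t_I; apply: I_closed => N; have [c hc] := dlevN_ex.
have [n0 hn0] := fconv_dnull (fsum_conv t_null) (2 * N + c%:Z).
exists (\sum_(n < n0) t n); split; first exact: (ideal_sum I_ideal).
apply/Flevel_dlev; rewrite -opprB.
by apply: dlev_le (hc _ _ (hn0 n0 (leqnn n0))); lia.
Qed.

Lemma ideal_skmul_left h f k :
  bseq u h -> (forall n, I (f n)) -> I (skmul u sigma delta h f k).
Proof.
move=> h_b f_I; apply: (ideal_sum I_ideal) => m _.
apply: fsum_ideal; first exact: skmul_term_dnull.
by move=> n; apply: (idealMl I_ideal); apply: skc_ideal.
Qed.

Lemma ideal_skmul_right f h k :
  bseq u f -> (forall n, I (f n)) -> I (skmul u sigma delta f h k).
Proof.
move=> f_b f_I; apply: (ideal_sum I_ideal) => m _.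
apply: fsum_ideal; first exact: skmul_term_dnull.
by move=> n; apply: (idealMr I_ideal).
Qed.

Lemma skmul_skconst a s k : skmul u sigma delta (skconst a) s k = a * s k.
Proof.
have single m : fsum u (fun n => skconst a n * skc sigma delta n (k - m) (s m)) =
    a * (if (k - m == 0)%N then s m else 0).
  by rewrite fsum_single // => -[|n] //= _; rewrite mul0r.
rewrite /skmul big_ord_recr /= single subnn eqxx big1 ?add0r // => m _.
by rewrite single subn_eq0 leqNgt ltn_ord mulr0.
Qed.

Definition skXn (j : nat) : nat -> A := fun k => (k == j)%:R.

Lemma bseq_skXn j : bseq u (skXn j).
Proof.
apply/bseq_dlev => K; exists j.+1 => n lt_jn.
by rewrite /skXn gtn_eqF //; exact: dlev0.
Qed.

Lemma IS_set_coef g : IS_set u sigma delta I g -> forall n, I (g n).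
Proof.
move=> [k [a [s [as_I ->]]]] n; apply: (ideal_sum I_ideal) => j _.
by rewrite skmul_skconst; apply: (idealMr I_ideal); case: (as_I j).
Qed.

Lemma sum_skXn (f : nat -> A) n0 n :
  \sum_(j < n0) skmul u sigma delta (skconst (f j)) (skXn j) n =
  if (n < n0)%N then f n else 0.
Proof.
under eq_bigr do rewrite skmul_skconst /skXn mulr_natr.
case: ltnP => [lt_n | le_n].
  rewrite (bigD1 (Ordinal lt_n)) //= eqxx mulr1n big1 ?addr0 // => j.
  by rewrite -val_eqE eq_sym => /negbTE ->; rewrite mulr0n.
by rewrite big1 // => j _; rewrite gtn_eqF ?mulr0n // (leq_trans (ltn_ord j)).
Qed.

Lemma sclosure_IS_coef f :
  sclosure u (IS_set u sigma delta I) f <-> bseq u f /\ forall i, I (f i).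
Proof.
split=> [[f_b f_near] | [f_b f_I]].
  split=> // i; apply: I_closed => N.
  have [g [/IS_set_coef g_I /(_ i) /weight_dlev near_i]] := f_near (N + i%:Z).
  by exists (g i); split => //; apply/Flevel_dlev; apply: dlev_le near_i; lia.
split=> // N; have [n0 hn0] := (bseq_dlev f).1 f_b (2 * N).
exists (fun n => \sum_(j < n0) skmul u sigma delta (skconst (f j)) (skXn j) n); split.
  exists n0, (fun j : 'I_n0 => f j), (fun j : 'I_n0 => skXn j); split=> // j.
  by split; [exact: f_I | exact: bseq_skXn].
move=> i; apply/weight_dlev; rewrite sum_skXn.
by case: ltnP => [_ | /hn0]; rewrite ?subrr ?subr0 //; exact: dlev0.
Qed.

Lemma s_ideal_closure_IS : s_ideal u sigma delta (sclosure u (IS_set u sigma delta I)).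
Proof.
split=> [f /sclosure_IS_coef [] //| | f g | h f h_b].
- apply/sclosure_IS_coef; split=> [|i]; last exact: (ideal0 I_ideal).
  by apply/bseq_dlev => K; exists 0%N => n _; exact: dlev0.
- move=> /sclosure_IS_coef [f_b f_I] /sclosure_IS_coef [g_b g_I].
  by apply/sclosure_IS_coef; split=> [|i]; [exact: bseqB | exact: (idealB I_ideal)].
- move=> /sclosure_IS_coef [f_b f_I]; split; apply/sclosure_IS_coef; split.
  + exact: skmul_bseq.
  + by move=> k; apply: ideal_skmul_left.
  + exact: skmul_bseq.
  + by move=> k; apply: ideal_skmul_right.
Qed.

End StableIdeal.
End Skew.
End Separated.
End Filtration.

Section Quotient.
Variables (R RI : pzRingType) (w : R -> \bar int) (wbar : RI -> \bar int).
Variables (I : R -> Prop) (pi : {rmorphism R -> RI}).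
Hypotheses (w_filt : wfiltration w) (I_ideal : ring_ideal I) (I_closed : wclosed w I).
Hypotheses (pi_surj : forall z, exists r, pi r = z) (pi_ker : forall r, pi r = 0 <-> I r).
Hypothesis wbar_lub :
  forall r, is_lub (fun e => exists y, I y /\ e = w (r + y)) (wbar (pi r)).

Lemma pi_addI r y : I y -> pi (r + y) = pi r.
Proof. by move=> /pi_ker y0; rewrite rmorphD y0 addr0. Qed.

Lemma w_le_wbar r : (w r <= wbar (pi r))%E.
Proof.
case: (wbar_lub r) => ub _; apply: ub; exists 0.
by rewrite addr0; split=> //; exact: (ideal0 I_ideal).
Qed.

Lemma wbar_attained r (N : int) :
  (N%:E <= wbar (pi r))%E -> exists2 y, I y & (N%:E <= w (r + y))%E.
Proof.
move=> le_N; apply: NNPP => none.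
suff : (wbar (pi r) <= (N - 1)%:E)%E by move/(le_trans le_N); rewrite lee_fin; lia.
case: (wbar_lub r) => _; apply=> _ [y [y_I ->]].
rewrite leNgt; apply/negP => lt_N; apply: none; exists y => //; move: lt_N.
by case: (w (r + y)) => [m||] //=; rewrite ?lte_fin ?lee_fin ?leey //; lia.
Qed.

Lemma wbar_separated : wseparated wbar.
Proof.
move=> z wbar_oo; have [r rz] := pi_surj z; rewrite -rz in wbar_oo *.
apply/pi_ker/I_closed => N.
have /wbar_attained [y y_I le_N] : (N%:E <= wbar (pi r))%E by rewrite wbar_oo leey.
by exists (- y); split; [exact: (idealN I_ideal) | rewrite /Flevel opprK].
Qed.

Lemma wbar_lift z : exists r, pi r = z /\ w r = wbar z.
Proof.
have [r0 <-] := pi_surj z; move: (w_le_wbar r0) (filt_neq_ninfty w_filt r0).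
case E: (wbar (pi r0)) => [v||] wle w_fin.
- have /wbar_attained [y y_I le_v] : (v%:E <= wbar (pi r0))%E by rewrite E.
  exists (r0 + y); split; first exact: pi_addI.
  by apply/le_anti; rewrite le_v -E -(pi_addI r0 y_I) w_le_wbar.
- rewrite (wbar_separated E); exists 0; split; first exact: rmorph0.
  by case: w_filt.
- by move: wle w_fin; rewrite leeNy_eq => ->.
Qed.

Lemma wbar_filtration : wfiltration wbar.
Proof.
split=> [|z|a b|a b].
- have := w_le_wbar 0; rewrite rmorph0; case: w_filt => -> _ _ _.
  by rewrite leye_eq => /eqP.
- by have [r [<- <-]] := wbar_lift z; exact: filt_neq_ninfty.
- have [ra [<- <-]] := wbar_lift a; have [rb [<- <-]] := wbar_lift b.
  by rewrite -rmorphD; apply: le_trans (w_le_wbar _); case: w_filt.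
- have [ra [<- <-]] := wbar_lift a; have [rb [<- <-]] := wbar_lift b.
  by rewrite -rmorphM; apply: le_trans (w_le_wbar _); case: w_filt.
Qed.

Lemma bseq_pi f : bseq w f -> bseq wbar (fun n => pi (f n)).
Proof.
move=> f_b N; have [n0 hn0] := f_b N; exists n0 => n /hn0 /le_trans; apply.
by rewrite leeD2r // leeD // w_le_wbar.
Qed.

Lemma bseq_lift g : bseq wbar g -> exists2 f, bseq w f & (fun n => pi (f n)) = g.
Proof.
move=> g_b; have [lift lift_spec] := choice _ wbar_lift.
exists (fun n => lift (g n)); last first.
  by apply: functional_extensionality => n; case: (lift_spec (g n)).
move=> N; have [n0 hn0] := g_b N; exists n0 => n.
by case: (lift_spec (g n)) => _ ->; apply: hn0.
Qed.

Lemma fconv_pi s l : fconv w s l -> fconv wbar (fun n => pi (s n)) (pi l).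
Proof.
move=> s_l N; have [n0 hn0] := s_l N; exists n0 => n /hn0.
by rewrite /Flevel -rmorphB => /le_trans; apply; exact: w_le_wbar.
Qed.

Lemma deg_pos_quotient (d : R -> R) (db : RI -> RI) :
  (forall r, db (pi r) = pi (d r)) -> deg_pos w d -> deg_pos wbar db.
Proof.
move=> dbE [c [c_gt0 hc]]; exists c; split=> // z z_neq0.
have [r [rz <-]] := wbar_lift z; rewrite -rz dbE in z_neq0 *.
apply: le_trans (hc r _) (w_le_wbar _).
by apply: contra_neq z_neq0 => ->; exact: rmorph0.
Qed.

Variables (sigma : {rmorphism R -> R}) (delta : {additive R -> R}).
Variables (sigmab deltab : RI -> RI).
Hypotheses (sigmabE : forall r, sigmab (pi r) = pi (sigma r))
  (deltabE : forall r, deltab (pi r) = pi (delta r)).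

Lemma skc_pi n i a : pi (skc sigma delta n i a) = skc sigmab deltab n i (pi a).
Proof.
elim: n i => [|n IH] [|i] //=; rewrite ?rmorph0 //.
- by rewrite rmorphD rmorph0 -IH deltabE.
- by rewrite rmorphD -!IH sigmabE deltabE.
Qed.

Hypothesis compat : compatible w sigma delta.

Lemma compatible_quotient : compatible wbar sigmab deltab.
Proof.
case: compat => compat_sigma compat_delta; split.
  by apply: deg_pos_quotient compat_sigma => r; rewrite sigmabE rmorphB.
exact: deg_pos_quotient compat_delta.
Qed.

Hypotheses (w_sep : wseparated w) (w_complete : wcomplete w).

Lemma fsum_pi t : dnull w t -> fsum wbar (fun n => pi (t n)) = pi (fsum w t).
Proof.
move=> t_null; apply: fsum_unique wbar_filtration wbar_separated _ _ _.
have -> : (fun N => \sum_(n < N) pi (t n)) = (fun N => pi (\sum_(n < N) t n)).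
  by apply: functional_extensionality => N; rewrite rmorph_sum.
exact/fconv_pi/fsum_conv.
Qed.

Lemma skiso_quotient :
  skiso w sigma delta wbar sigmab deltab (sclosure w (IS_set w sigma delta I)).
Proof.
exists (fun f n => pi (f n)); split=> [||]; first exact: bseq_pi.
  by move=> g /bseq_lift [f f_b <-]; exists f.
split=> [f g _ _|f g f_b _||f f_b].
- by apply: functional_extensionality => n; rewrite /skadd rmorphD.
- apply: functional_extensionality => k.
  rewrite /skmul rmorph_sum; apply: eq_bigr => m _.
  rewrite -fsum_pi; last exact: skmul_term_dnull.
  by congr fsum; apply: functional_extensionality => n; rewrite rmorphM skc_pi.
- apply: functional_extensionality => k.
  by rewrite /skone; case: eqP; rewrite ?rmorph1 ?rmorph0.
- rewrite sclosure_IS_coef //; split=> [pif0 | [_ f_I]].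
    by split=> // i; apply/pi_ker; exact: (congr1 (fun h => h i) pif0).
  by apply: functional_extensionality => i; exact/pi_ker.
Qed.

End Quotient.

Theorem lemma2p1p2 (R RI : pzRingType) (w : R -> \bar int)
  (sigma : {rmorphism R -> R}) (delta : {additive R -> R})
  (I : R -> Prop) (pi : {rmorphism R -> RI}) (wbar : RI -> \bar int)
  (sigmab deltab : RI -> RI) :
  (* (R, w): wcomplete, wseparated, Zariskian wfiltration *)
  wfiltration w -> wseparated w -> wcomplete w -> zariskian w ->
  (* (sigma, delta) skew derivation compatible with w *)
  bijective sigma ->
  (forall a b, delta (a * b) = delta a * b + sigma a * delta b) ->
  compatible w sigma delta ->
  (* I closed ideal, sigma- and delta-stable *)
  ring_ideal I -> wclosed w I ->
  (forall a, I a -> I (sigma a)) -> (forall a, I a -> I (delta a)) ->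
  (* RI = R/I with projection pi *)
  (forall z : RI, exists r : R, pi r = z) -> (forall r, pi r = 0 <-> I r) ->
  (* quotient wfiltration wbar(r + I) = sup { w(r + y) : y ∈ I } *)
  (forall r, is_lub (fun e => exists y, I y /\ e = w (r + y)) (wbar (pi r))) ->
  (* induced skew derivation *)
  (forall r, sigmab (pi r) = pi (sigma r)) ->
  (forall r, deltab (pi r) = pi (delta r)) ->
  compatible wbar sigmab deltab /\
  s_ideal w sigma delta (sclosure w (IS_set w sigma delta I)) /\
  skiso w sigma delta wbar sigmab deltab (sclosure w (IS_set w sigma delta I)).
Proof.
move=> w_filt w_sep w_complete _ _ _ compat I_ideal I_closed I_sigma I_delta
  pi_surj pi_ker wbar_lub sigmabE deltabE.
split; first exact: (compatible_quotient w_filt I_ideal I_closed pi_surj pi_ker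
  wbar_lub sigmabE deltabE compat).
split; first exact: s_ideal_closure_IS.
exact: skiso_quotient.
Qed.
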